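(* For every $\varepsilon>0$ there exist constants $b>1$, $c\in(0,2\sqrt b)$, $C>0$ with $C<(\pi+\varepsilon)\,c\sqrt b$, and a function $a\in L^\infty(\mathbb{R}^+)$ with $0\le a(t)\le C$ for almost every $t\ge 0$, such that the equation $$u''(t)+c\,u'(t)+\big(b+a(t)\big)u(t)=0\quad\text{for a.e. } t\ge 0$$ has a solution $u\in W^{2,\infty}_{\mathrm{loc}}(\mathbb{R}^+)$ which is unbounded on $\mathbb{R}^+=[0,\infty)$. *)

From Stdlib Require Import Reals.
Open Scope R_scope.

(* Outer (Lebesgue) measure of E is at most eps: E is covered by countably
   many open intervals (lo n, hi n) of total length <= eps. *)
Definition outer_le (E : R -> Prop) (eps : R) : Prop :=
  exists lo hi : nat -> R,
    (forall n, lo n <= hi n) /\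
    (forall x, E x -> exists n, lo n < x < hi n) /\
    (forall N, sum_f_R0 (fun n => hi n - lo n) N <= eps).

Definition null_set (E : R -> Prop) : Prop :=
  forall eps, 0 < eps -> outer_le E eps.

Definition open_set (O : R -> Prop) : Prop :=
  forall x, O x -> exists d, 0 < d /\ forall y, Rabs (y - x) < d -> O y.

(* Lebesgue measurability (outer regularity characterization) *)
Definition leb_measurable (E : R -> Prop) : Prop :=
  forall eps, 0 < eps -> exists O, open_set O /\ (forall x, E x -> O x) /\
    outer_le (fun x => O x /\ ~ E x) eps.

Definition measurable_on_Rplus (a : R -> R) : Prop :=
  forall r, leb_measurable (fun t => 0 <= t /\ r < a t).

Definition ae_Rplus (P : R -> Prop) : Prop :=
  null_set (fun t => 0 <= t /\ ~ P t).

(* u in W^{2,oo}_loc(R^+): u is C^1 with derivative du, and du is Lipschitz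
   on every compact [0,T] (1D characterization of W^{2,oo}_loc). *)
Definition W2inf_loc (u du : R -> R) : Prop :=
  (forall t, 0 <= t -> derivable_pt_lim u t (du t)) /\
  (forall T, 0 <= T -> exists L, forall s t, 0 <= s <= T -> 0 <= t <= T ->
      Rabs (du s - du t) <= L * Rabs (s - t)).

From Stdlib Require Import Reals Lra Lia ZArith.
From Coquelicot Require Import Coquelicot.
Open Scope R_scope.

(* With b = 1 + c^2/4 the substitution u = e^{-ct/2} v turns the equation into
   v'' + (1 + a) v = 0.  We let a switch between 0 and C = Om^2 - 1 (Om > 1): each period
   of length pi/2 + pi/(2 Om) consists of a quarter oscillation of frequency 1 (a = 0)
   followed by a quarter oscillation of frequency Om (a = C), both centered at the
   maximum of |v|.  The pieces fit together C^1, and across each period the amplitude is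
   multiplied by -Om, so |u| at the n-th center is a constant times
   (Om e^{-c period/2})^n, which is unbounded as soon as this factor exceeds 1.  For Om
   close to 1 this is compatible with C / c = pi Om (Om + 1) / 2 close to pi. *)

Definition osc (c w K t0 y : R) : R := exp (-(c/2)*y) * K * cos (w*(y - t0)).
Definition dosc (c w K t0 y : R) : R :=
  exp (-(c/2)*y) * K * (- w * sin (w*(y - t0)) - c/2 * cos (w*(y - t0))).
Definition ddosc (c w K t0 y : R) : R :=
  - c * dosc c w K t0 y - (w^2 + c^2/4) * osc c w K t0 y.

Lemma osc_derive c w K t0 y : derivable_pt_lim (osc c w K t0) y (dosc c w K t0 y).
Proof. apply is_derive_Reals; unfold osc, dosc, Rminus; auto_derive; [easy | ring]. Qed.

Lemma dosc_derive c w K t0 y : derivable_pt_lim (dosc c w K t0) y (ddosc c w K t0 y).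
Proof.
  apply is_derive_Reals; unfold ddosc, osc, dosc, Rminus; auto_derive; [easy | field].
Qed.

Lemma damping_bound c y : 0 <= c -> 0 <= y -> 0 < exp (-(c/2)*y) <= 1.
Proof.
  intros Hc Hy; split; [apply exp_pos|].
  rewrite <- exp_0; destruct (Rlt_or_le (-(c/2)*y) 0) as [Hneg|Hnonneg].
  - left; apply exp_increasing, Hneg.
  - replace (-(c/2)*y) with 0 by nra; lra.
Qed.

Lemma exp_nat_mult n x : exp (INR n * x) = exp x ^ n.
Proof.
  induction n as [|n IH]; [simpl; rewrite Rmult_0_l; apply exp_0 |].
  rewrite S_INR, Rmult_plus_distr_r, Rmult_1_l, exp_plus, IH; simpl; ring.
Qed.

Lemma osc_bound c w K t0 y : 0 <= c -> 0 <= y -> Rabs (osc c w K t0 y) <= Rabs K.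
Proof.
  intros Hc Hy; destruct (damping_bound c y Hc Hy) as [E0 E1].
  unfold osc; rewrite !Rabs_mult, (Rabs_pos_eq (exp _)) by lra.
  assert (Rabs (cos (w*(y - t0))) <= 1) by apply Rabs_le, COS_bound.
  assert (0 <= Rabs K) by apply Rabs_pos.
  assert (0 <= Rabs (cos (w*(y - t0)))) by apply Rabs_pos.
  assert (Rabs K * Rabs (cos (w*(y - t0))) <= Rabs K) by nra.
  assert (0 <= Rabs K * Rabs (cos (w*(y - t0)))) by nra.
  nra.
Qed.

Lemma dosc_bound c w K t0 y : 0 <= c -> 0 <= w -> 0 <= y ->
  Rabs (dosc c w K t0 y) <= Rabs K * (w + c/2).
Proof.
  intros Hc Hw Hy; destruct (damping_bound c y Hc Hy) as [E0 E1].
  set (s := sin (w*(y - t0))); set (k := cos (w*(y - t0))).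
  assert (Hs : Rabs s <= 1) by apply Rabs_le, SIN_bound.
  assert (Hk : Rabs k <= 1) by apply Rabs_le, COS_bound.
  assert (Hsk : Rabs (- w * s - c/2 * k) <= w + c/2).
  { unfold Rminus; eapply Rle_trans; [apply Rabs_triang|].
    rewrite Rabs_Ropp, !Rabs_mult, Rabs_Ropp, (Rabs_pos_eq w), (Rabs_pos_eq (c/2)) by lra.
    assert (0 <= Rabs s) by apply Rabs_pos. assert (0 <= Rabs k) by apply Rabs_pos. nra. }
  unfold dosc; fold s k; rewrite !Rabs_mult, (Rabs_pos_eq (exp _)) by lra.
  assert (0 <= Rabs K) by apply Rabs_pos.
  assert (0 <= Rabs (- w * s - c/2 * k)) by apply Rabs_pos.
  assert (Rabs K * Rabs (- w * s - c/2 * k) <= Rabs K * (w + c/2))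
    by (apply Rmult_le_compat_l; lra).
  assert (0 <= Rabs K * Rabs (- w * s - c/2 * k)) by nra.
  nra.
Qed.

Lemma ddosc_bound c w K t0 y : 0 <= c -> 0 <= w -> 0 <= y ->
  Rabs (ddosc c w K t0 y) <= Rabs K * (w + c)^2.
Proof.
  intros Hc Hw Hy.
  assert (B0 := osc_bound c w K t0 y Hc Hy).
  assert (B1 := dosc_bound c w K t0 y Hc Hw Hy).
  assert (0 <= Rabs K) by apply Rabs_pos.
  unfold ddosc, Rminus; eapply Rle_trans; [apply Rabs_triang|].
  rewrite Rabs_Ropp, !Rabs_mult, Rabs_Ropp, (Rabs_pos_eq c), (Rabs_pos_eq (w^2 + _)) by nra.
  assert (c * Rabs (dosc c w K t0 y) <= c * (Rabs K * (w + c/2)))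
    by (apply Rmult_le_compat_l; lra).
  assert ((w^2 + c^2/4) * Rabs (osc c w K t0 y) <= (w^2 + c^2/4) * Rabs K)
    by (apply Rmult_le_compat_l; nra).
  assert (0 <= Rabs K * (c * w + c^2 / 4)) by (apply Rmult_le_pos; nra).
  nra.
Qed.

(* At its center an oscillation has value K e^{-c t0/2} and slope -c/2 times that,
   whatever its frequency: switching the frequency there is C^1. *)
Lemma osc_center c w w' K t0 :
  osc c w K t0 t0 = osc c w' K t0 t0 /\ dosc c w K t0 t0 = dosc c w' K t0 t0.
Proof.
  unfold osc, dosc; rewrite Rminus_diag, !Rmult_0_r, sin_0, cos_0; split; ring.
Qed.

(* This is where the amplitude is multiplied by -w. *)
Lemma osc_quarter c w K t0 y : 0 < w -> y = t0 + PI/(2*w) ->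
  osc c w K t0 y = osc c 1 (- w * K) (y + PI/2) y /\
  dosc c w K t0 y = dosc c 1 (- w * K) (y + PI/2) y.
Proof.
  intros Hw ->; unfold osc, dosc.
  replace (w * (t0 + PI/(2*w) - t0)) with (PI/2) by (field; lra).
  replace (1 * (t0 + PI/(2*w) - (t0 + PI/(2*w) + PI/2))) with (- (PI/2)) by ring.
  rewrite sin_neg, cos_neg, sin_PI2, cos_PI2; split; ring.
Qed.

Lemma derivable_pt_lim_glue (f g1 g2 : R -> R) x l d : 0 < d ->
  (forall y, x - d <= y <= x -> f y = g1 y) ->
  (forall y, x <= y <= x + d -> f y = g2 y) ->
  derivable_pt_lim g1 x l -> derivable_pt_lim g2 x l -> derivable_pt_lim f x l.
Proof.
  intros Hd E1 E2 D1 D2 eps Heps.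
  destruct (D1 eps Heps) as [[d1 Hd1] HD1]; destruct (D2 eps Heps) as [[d2 Hd2] HD2].
  simpl in HD1, HD2.
  assert (Hm : 0 < Rmin d (Rmin d1 d2)) by (repeat apply Rmin_glb_lt; auto).
  exists (mkposreal _ Hm); simpl; intros h Hh Hlt.
  assert (Rmin d (Rmin d1 d2) <= d) by apply Rmin_l.
  assert (Rmin d (Rmin d1 d2) <= Rmin d1 d2) by apply Rmin_r.
  assert (Rmin d1 d2 <= d1) by apply Rmin_l. assert (Rmin d1 d2 <= d2) by apply Rmin_r.
  assert (h <= Rabs h) by apply Rle_abs.
  assert (- h <= Rabs h) by (rewrite <- Rabs_Ropp; apply Rle_abs).
  destruct (Rlt_or_le h 0) as [Hneg|Hpos].
  - rewrite (E1 (x + h)), (E1 x) by lra; apply HD1; auto; lra.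
  - rewrite (E2 (x + h)), (E2 x) by lra; apply HD2; auto; lra.
Qed.

Lemma derivable_pt_lim_local (f g : R -> R) x l d : 0 < d ->
  (forall y, x - d <= y <= x + d -> f y = g y) ->
  derivable_pt_lim g x l -> derivable_pt_lim f x l.
Proof.
  intros Hd E D; apply (derivable_pt_lim_glue f g g x l d); auto;
    intros y Hy; apply E; lra.
Qed.

Definition lipschitz_on (f : R -> R) (lo hi L : R) : Prop :=
  forall s t, lo <= s <= hi -> lo <= t <= hi -> Rabs (f s - f t) <= L * Rabs (s - t).

Lemma lipschitz_of_derive (g dg : R -> R) lo hi L :
  (forall y, lo <= y <= hi -> derivable_pt_lim g y (dg y)) ->
  (forall y, lo <= y <= hi -> Rabs (dg y) <= L) -> lipschitz_on g lo hi L.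
Proof.
  intros D B.
  assert (Hmvt : forall s t, lo <= s < t -> t <= hi -> Rabs (g t - g s) <= L * Rabs (t - s)).
  { intros s t Hs Ht.
    destruct (MVT_cor2 g dg s t) as [z [Ez Hz]]; [lra | intros; apply D; lra |].
    rewrite Ez, Rabs_mult; apply Rmult_le_compat_r; [apply Rabs_pos | apply B; lra]. }
  intros s t Hs Ht.
  destruct (Rtotal_order s t) as [Hlt | [-> | Hgt]].
  - rewrite <- Rabs_Ropp, (Rabs_minus_sym s t).
    replace (- (g s - g t)) with (g t - g s) by ring; apply Hmvt; auto; lra.
  - rewrite !Rminus_diag, Rabs_R0; lra.
  - apply Hmvt; auto; lra.
Qed.

Lemma lipschitz_concat f lo mid hi L : 0 <= L -> lo <= mid <= hi ->
  lipschitz_on f lo mid L -> lipschitz_on f mid hi L -> lipschitz_on f lo hi L.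
Proof.
  intros HL Hmid L1 L2.
  assert (Hcross : forall s t, lo <= s <= mid -> mid <= t <= hi ->
    Rabs (f s - f t) <= L * Rabs (s - t)).
  { intros s t Hs Ht.
    assert (E1 := L1 s mid ltac:(lra) ltac:(lra)).
    assert (E2 := L2 mid t ltac:(lra) ltac:(lra)).
    assert (T := Rabs_triang (f s - f mid) (f mid - f t)).
    replace (f s - f mid + (f mid - f t)) with (f s - f t) in T by ring.
    rewrite (Rabs_left1 (s - t)) by lra; rewrite (Rabs_left1 (s - mid)) in E1 by lra.
    rewrite (Rabs_left1 (mid - t)) in E2 by lra; nra. }
  intros s t Hs Ht.
  destruct (Rle_or_lt s mid), (Rle_or_lt t mid).
  - apply L1; lra.
  - apply Hcross; lra.
  - rewrite Rabs_minus_sym, (Rabs_minus_sym s); apply Hcross; lra.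
  - apply L2; lra.
Qed.

Lemma lipschitz_weaken f lo hi L L' : L <= L' -> lipschitz_on f lo hi L -> lipschitz_on f lo hi L'.
Proof.
  intros HL Hf s t Hs Ht; specialize (Hf s t Hs Ht).
  assert (0 <= Rabs (s - t)) by apply Rabs_pos; nra.
Qed.

Lemma lipschitz_ext f g lo hi L : (forall y, lo <= y <= hi -> f y = g y) ->
  lipschitz_on g lo hi L -> lipschitz_on f lo hi L.
Proof. intros E Hg s t Hs Ht; rewrite (E s Hs), (E t Ht); auto. Qed.

Lemma outer_le_mono (E F : R -> Prop) eps :
  (forall x, F x -> E x) -> outer_le E eps -> outer_le F eps.
Proof. intros HFE (lo & hi & H1 & H2 & H3); exists lo, hi; auto. Qed.

Lemma outer_le_interval (E : R -> Prop) lo0 hi0 eps : lo0 <= hi0 -> hi0 - lo0 <= eps ->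
  (forall x, E x -> lo0 < x < hi0) -> outer_le E eps.
Proof.
  intros Hlh Heps HE.
  exists (fun n => match n with 0%nat => lo0 | _ => 0 end),
         (fun n => match n with 0%nat => hi0 | _ => 0 end).
  split; [intros [|n]; lra | split; [intros x Hx; exists 0%nat; auto |]].
  intro N; induction N as [|N IH]; simpl in *; lra.
Qed.

Lemma null_set_mono (E F : R -> Prop) :
  (forall x, F x -> E x) -> null_set E -> null_set F.
Proof. intros HFE HE eps Heps; apply (outer_le_mono E); auto. Qed.

(* Every countable set {p n | n} is null: cover p n by an interval of length eps 2^{-n-1}. *)
Lemma null_set_range (p : nat -> R) : null_set (fun t => exists n, t = p n).
Proof.
  intros eps Heps.
  set (w := fun n => eps/4 * (1/2)^n).
  assert (Hw : forall n, 0 < w n) by (intro n; apply Rmult_lt_0_compat; [lra | apply pow_lt; lra]).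
  exists (fun n => p n - w n), (fun n => p n + w n).
  split; [intro n; specialize (Hw n); lra |].
  split; [intros x [n ->]; exists n; specialize (Hw n); lra |].
  intro N.
  rewrite (sum_eq _ (fun n => (1/2)^n * (eps/2))) by (intros; unfold w; field).
  rewrite <- scal_sum.
  assert (Hgeom := GP_finite (1/2) N).
  assert (0 < (1/2)^(N+1)) by (apply pow_lt; lra).
  assert (sum_f_R0 (fun n => (1/2)^n) N <= 2) by lra.
  change (pow (1/2)) with (fun n : nat => (1/2)^n); nra.
Qed.

(* A property holding at every t >= 0 holds almost everywhere on R^+ (the exceptional
   set is empty, hence inside the null set {0}). *)
Lemma ae_Rplus_everywhere (P : R -> Prop) : (forall t, 0 <= t -> P t) -> ae_Rplus P.
Proof.
  intro HP; apply (null_set_mono (fun t => exists k : nat, t = 0)); [| apply null_set_range].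
  intros t [Ht HnP]; exfalso; auto.
Qed.

Lemma leb_measurable_nonneg_open (O : R -> Prop) :
  open_set O -> leb_measurable (fun t => 0 <= t /\ O t).
Proof.
  intros HO eps Heps.
  exists (fun x => - (eps/2) < x /\ O x); split; [|split].
  - intros x [Hx Ox]; destruct (HO x Ox) as (d & Hd & Hball).
    exists (Rmin d (x + eps/2)); split; [apply Rmin_glb_lt; lra |].
    intros y Hy; assert (Rmin d (x + eps/2) <= d) by apply Rmin_l.
    assert (Rmin d (x + eps/2) <= x + eps/2) by apply Rmin_r.
    apply Rabs_def2 in Hy; split; [lra | apply Hball, Rabs_def1; lra].
  - intros x [Hx Ox]; split; [lra | auto].
  - apply outer_le_interval with (- (eps/2)) 0; try lra.
    intros x [[Hx Ox] HE]; split; [lra |].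
    destruct (Rlt_or_le x 0); [auto | exfalso; auto].
Qed.

Lemma measurable_of_open_superlevels (f : R -> R) :
  (forall r, open_set (fun t => r < f t)) -> measurable_on_Rplus f.
Proof. intros Hf r; apply leb_measurable_nonneg_open, Hf. Qed.

Definition idx (T t : R) : nat := Z.to_nat (Int_part (t / T)).

(* Every t < T, negative ones included, gets index 0. *)
Lemma idx_small T t : 0 < T -> t < T -> idx T t = 0%nat.
Proof.
  intros HT Ht; unfold idx.
  assert (t / T < 1) by (apply Rmult_lt_reg_r with T; [lra|]; field_simplify; lra).
  destruct (base_Int_part (t / T)) as [H1 _].
  assert (Int_part (t / T) < 1)%Z by (apply lt_IZR; lra).
  lia.
Qed.

Lemma idx_unique T n t : 0 < T -> INR n * T <= t < (INR n + 1) * T -> idx T t = n.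
Proof.
  intros HT [H1 H2]; unfold idx.
  rewrite <- (Int_part_spec (t / T) (Z.of_nat n)), Nat2Z.id; [reflexivity |].
  rewrite <- INR_IZR_INZ; split.
  - apply Rmult_lt_reg_r with T; [lra |]; field_simplify; lra.
  - apply Rmult_le_reg_r with T; [lra |]; field_simplify; lra.
Qed.

Lemma idx_spec T t : 0 < T -> 0 <= t ->
  INR (idx T t) * T <= t < (INR (idx T t) + 1) * T.
Proof.
  intros HT Ht; destruct (base_Int_part (t / T)) as [H1 H2].
  assert (0 <= t / T) by (apply Rdiv_le_0_compat; lra).
  assert (0 <= Int_part (t / T))%Z by (cut (-1 < Int_part (t / T))%Z; [lia | apply lt_IZR; lra]).
  assert (E : INR (idx T t) = IZR (Int_part (t / T)))
    by (unfold idx; rewrite INR_IZR_INZ, Z2Nat.id; auto).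
  rewrite E; split.
  - apply Rmult_le_reg_r with (/ T); [apply Rinv_0_lt_compat; lra |].
    field_simplify; lra.
  - apply Rmult_lt_reg_r with (/ T); [apply Rinv_0_lt_compat; lra |].
    field_simplify; lra.
Qed.

Section Construction.

Variables c Om : R.
Hypothesis c_nonneg : 0 <= c.
Hypothesis Om_ge1 : 1 <= Om.

(* Period n is [n period, (n+1) period]; its center n period + pi/2 separates the
   frequency-1 half from the frequency-Om half.  u runs, on period n, the oscillation of
   amplitude (-Om)^n centered at center n; a = freq^2 - 1 is 0 or Om^2 - 1. *)
Definition period : R := PI/2 + PI/(2*Om).
Definition phase (t : R) : R := t - INR (idx period t) * period.
Definition center (n : nat) : R := INR n * period + PI/2.
Definition freq (s : R) : R := if Rle_dec s (PI/2) then 1 else Om.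
Definition amp (n : nat) : R := (-Om)^n.

Definition u (t : R) : R :=
  osc c (freq (phase t)) (amp (idx period t)) (center (idx period t)) t.
Definition du (t : R) : R :=
  dosc c (freq (phase t)) (amp (idx period t)) (center (idx period t)) t.
Definition a (t : R) : R := freq (phase t) ^ 2 - 1.

(* The second half of each period is a quarter oscillation of frequency Om. *)
Lemma quarter_pos : 0 < PI/(2*Om).
Proof. apply Rdiv_lt_0_compat; [apply PI_RGT_0 | lra]. Qed.

Lemma period_pos : 0 < period.
Proof. assert (H := quarter_pos); unfold period; generalize PI_RGT_0; lra. Qed.

Lemma center_quarter n : center n + PI/(2*Om) = (INR n + 1) * period.
Proof. unfold center, period; ring. Qed.

Lemma u_first_half n y : INR n * period <= y <= center n ->
  u y = osc c 1 (amp n) (center n) y /\ du y = dosc c 1 (amp n) (center n) y.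
Proof.
  intro Hy; assert (Hq := quarter_pos); assert (Hc := center_quarter n).
  assert (Hn : idx period y = n) by (apply idx_unique; [apply period_pos | lra]).
  unfold u, du, freq, phase; rewrite Hn.
  destruct (Rle_dec (y - INR n * period) (PI/2)); [auto | unfold center in Hy; lra].
Qed.

(* To the left of 0, u continues the first oscillation (needed for differentiability at 0). *)
Lemma u_before_start y : y <= 0 ->
  u y = osc c 1 (amp 0) (center 0) y /\ du y = dosc c 1 (amp 0) (center 0) y.
Proof.
  intro Hy; assert (HT := period_pos); assert (HP := PI_RGT_0).
  assert (H0 : idx period y = 0%nat) by (apply idx_small; lra).
  unfold u, du, freq, phase; rewrite H0.
  destruct (Rle_dec (y - INR 0 * period) (PI/2)); [auto | simpl in *; lra].
Qed.

(* On the closed second half of period n, u is the frequency-Om oscillation; the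
   endpoints are covered by osc_center and osc_quarter. *)
Lemma u_second_half n y : center n <= y <= (INR n + 1) * period ->
  u y = osc c Om (amp n) (center n) y /\ du y = dosc c Om (amp n) (center n) y.
Proof.
  intro Hy; assert (Hq := quarter_pos); assert (Hc := center_quarter n).
  destruct (Rlt_or_le y ((INR n + 1) * period)) as [Hlt | Hend].
  - assert (Hn : idx period y = n)
      by (apply idx_unique; [apply period_pos | unfold center in Hy; generalize PI_RGT_0; lra]).
    unfold u, du, freq, phase; rewrite Hn.
    destruct (Rle_dec (y - INR n * period) (PI/2)); [| auto].
    assert (Ey : y = center n) by (unfold center in *; lra).
    rewrite Ey; apply osc_center.
  - (* at the end of period n, u is the start of period n + 1 *)
    assert (Ey : y = center n + PI/(2*Om)) by lra.
    destruct (u_first_half (S n) y) as [-> ->]; [unfold center; rewrite S_INR; generalize PI_RGT_0; lra |].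
    replace (amp (S n)) with (- Om * amp n) by (unfold amp; simpl; ring).
    replace (center (S n)) with (y + PI/2) by (unfold center; rewrite S_INR; lra).
    destruct (osc_quarter c Om (amp n) (center n) y) as [E1 E2]; [lra | auto |].
    rewrite E1, E2; auto.
Qed.

Lemma u_left_piece t : 0 <= t -> exists w K t0 d, 0 < d /\
  forall y, t - d <= y <= t -> u y = osc c w K t0 y /\ du y = dosc c w K t0 y.
Proof.
  intro Ht; assert (Hq := quarter_pos).
  destruct (idx_spec period t period_pos Ht) as [L1 L2]; set (n := idx period t) in *.
  assert (Hc := center_quarter n).
  destruct (Rlt_or_le (center n) t) as [Hsecond | Hfirst].
  - exists Om, (amp n), (center n), (t - center n); split; [lra |].
    intros y Hy; apply u_second_half; lra.
  - destruct (Rlt_or_le (INR n * period) t) as [Hinside | Hstart].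
    + exists 1, (amp n), (center n), (t - INR n * period); split; [lra |].
      intros y Hy; apply u_first_half; lra.
    + destruct n as [|m].
      * exists 1, (amp 0), (center 0), 1; split; [lra |].
        intros y Hy; apply u_before_start; simpl in Hstart; lra.
      * rewrite S_INR in *; assert (Hm := center_quarter m).
        exists Om, (amp m), (center m), (PI/(2*Om)); split; [lra |].
        intros y Hy; apply u_second_half; lra.
Qed.

Lemma u_right_piece t : 0 <= t -> exists w K t0 d, 0 < d /\
  forall y, t <= y <= t + d -> u y = osc c w K t0 y /\ du y = dosc c w K t0 y.
Proof.
  intro Ht.
  destruct (idx_spec period t period_pos Ht) as [L1 L2]; set (n := idx period t) in *.
  destruct (Rlt_or_le t (center n)) as [Hfirst | Hsecond].
  - exists 1, (amp n), (center n), (center n - t); split; [lra |].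
    intros y Hy; apply u_first_half; lra.
  - exists Om, (amp n), (center n), ((INR n + 1) * period - t); split; [lra |].
    intros y Hy; apply u_second_half; lra.
Qed.

(* The pieces fit together with matching slopes, so u is C^1 on R^+ with u' = du. *)
Lemma u_derive t : 0 <= t -> derivable_pt_lim u t (du t).
Proof.
  intro Ht.
  destruct (u_left_piece t Ht) as (w1 & K1 & s1 & d1 & Hd1 & E1).
  destruct (u_right_piece t Ht) as (w2 & K2 & s2 & d2 & Hd2 & E2).
  assert (Rmin d1 d2 <= d1) by apply Rmin_l; assert (Rmin d1 d2 <= d2) by apply Rmin_r.
  apply (derivable_pt_lim_glue u (osc c w1 K1 s1) (osc c w2 K2 s2) t (du t) (Rmin d1 d2)).
  - apply Rmin_glb_lt; auto.
  - intros y Hy; apply E1; lra.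
  - intros y Hy; apply E2; lra.
  - destruct (E1 t) as [_ ->]; [lra | apply osc_derive].
  - destruct (E2 t) as [_ ->]; [lra | apply osc_derive].
Qed.

Lemma u_regular_piece t : 0 <= t -> phase t <> 0 -> phase t <> PI/2 ->
  exists d, 0 < d /\ forall y, t - d <= y <= t + d ->
    u y = osc c (freq (phase t)) (amp (idx period t)) (center (idx period t)) y /\
    du y = dosc c (freq (phase t)) (amp (idx period t)) (center (idx period t)) y.
Proof.
  intros Ht N0 N1; assert (Hq := quarter_pos).
  destruct (idx_spec period t period_pos Ht) as [L1 L2].
  assert (Hc := center_quarter (idx period t)).
  unfold freq, phase in *; set (n := idx period t) in *; unfold center in *.
  destruct (Rle_dec (t - INR n * period) (PI/2)) as [Hfirst | Hsecond].
  - set (d := Rmin (t - INR n * period) (PI/2 - (t - INR n * period))).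
    assert (d <= t - INR n * period) by apply Rmin_l.
    assert (d <= PI/2 - (t - INR n * period)) by apply Rmin_r.
    exists d; split; [apply Rmin_glb_lt; lra |].
    intros y Hy; apply u_first_half; unfold center; lra.
  - set (d := Rmin (t - INR n * period - PI/2) ((INR n + 1) * period - t)).
    assert (d <= t - INR n * period - PI/2) by apply Rmin_l.
    assert (d <= (INR n + 1) * period - t) by apply Rmin_r.
    exists d; split; [apply Rmin_glb_lt; lra |].
    intros y Hy; apply u_second_half; unfold center; lra.
Qed.

(* Off the switching points u solves u'' + c u' + (1 + c^2/4 + a) u = 0, because on a
   piece of frequency w one has a = w^2 - 1. *)
Lemma u_ode t : 0 <= t -> phase t <> 0 -> phase t <> PI/2 ->
  exists ddu, derivable_pt_lim du t ddu /\ ddu + c * du t + (1 + c^2/4 + a t) * u t = 0.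
Proof.
  intros Ht N0 N1.
  destruct (u_regular_piece t Ht N0 N1) as (d & Hd & E).
  set (w := freq (phase t)) in *; set (K := amp (idx period t)) in *;
    set (s := center (idx period t)) in *.
  exists (ddosc c w K s t); split.
  - apply (derivable_pt_lim_local du (dosc c w K s) t _ d Hd);
      [intros y Hy; apply E, Hy | apply dosc_derive].
  - destruct (E t) as [-> ->]; [lra |].
    unfold a, ddosc; fold w; ring.
Qed.

(* The switching points: the k-th one is the start (k even) or the center (k odd) of
   period k/2.  Being countable, they form a null set, so the equation holds a.e. *)
Definition switch_point (k : nat) : R :=
  INR (Nat.div2 k) * period + (if Nat.even k then 0 else PI/2).

Lemma u_ode_ae :
  ae_Rplus (fun t => exists ddu, derivable_pt_lim du t ddu /\
                       ddu + c * du t + (1 + c^2/4 + a t) * u t = 0).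
Proof.
  apply (null_set_mono (fun t => exists k, t = switch_point k)); [| apply null_set_range].
  intros t [Ht Hfail]; set (n := idx period t).
  destruct (Req_dec (phase t) 0) as [E0 | N0].
  - exists (2 * n)%nat; unfold switch_point.
    rewrite Nat.div2_double, Nat.even_mul; simpl.
    unfold phase in E0; fold n in E0; lra.
  - destruct (Req_dec (phase t) (PI/2)) as [E1 | N1].
    + exists (S (2 * n)); unfold switch_point.
      rewrite Nat.div2_succ_double, Nat.even_succ, Nat.odd_mul; simpl.
      unfold phase in E1; fold n in E1; lra.
    + exfalso; apply Hfail, u_ode; auto.
Qed.

Lemma a_values t : a t = 0 \/ a t = Om^2 - 1.
Proof. unfold a, freq; destruct (Rle_dec _ _); [left | right]; ring. Qed.

Lemma a_bounds t : 0 <= a t <= Om^2 - 1.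
Proof. destruct (a_values t) as [-> | ->]; nra. Qed.

(* a is lower semicontinuous: {a > r} is empty, everything, or the union of the open
   second halves of the periods. *)
Lemma a_superlevel_open r : open_set (fun t => r < a t).
Proof.
  intros t Hrt; cbv beta in Hrt; assert (Hq := quarter_pos).
  destruct (Rle_dec (phase t) (PI/2)) as [Hph | Hph].
  - assert (E : a t = 0) by (unfold a, freq; destruct (Rle_dec _ _); [ring | lra]).
    exists 1; split; [lra |]; intros y _; cbv beta; assert (H := a_bounds y); lra.
  - apply Rnot_le_lt in Hph.
    assert (Ht : 0 <= t).
    { destruct (Rlt_or_le t 0) as [Hneg|]; [exfalso | auto].
      unfold phase in Hph; rewrite idx_small in Hph by (generalize period_pos; lra).
      simpl in Hph; generalize PI_RGT_0; lra. }
    destruct (idx_spec period t period_pos Ht) as [L1 L2].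
    unfold phase in Hph; set (n := idx period t) in *.
    set (d := Rmin (t - INR n * period - PI/2) ((INR n + 1) * period - t)).
    assert (d <= t - INR n * period - PI/2) by apply Rmin_l.
    assert (d <= (INR n + 1) * period - t) by apply Rmin_r.
    exists d; split; [apply Rmin_glb_lt; lra |].
    intros y Hy; cbv beta; apply Rabs_def2 in Hy.
    assert (Hn : idx period y = n)
      by (apply idx_unique; [apply period_pos | generalize PI_RGT_0; lra]).
    replace (a y) with (a t); [exact Hrt |].
    unfold a, freq, phase; rewrite Hn; fold n.
    destruct (Rle_dec (t - INR n * period) (PI/2)), (Rle_dec (y - INR n * period) (PI/2));
      lra || reflexivity.
Qed.

Lemma amp_abs n : Rabs (amp n) = Om^n.
Proof. unfold amp; rewrite <- RPow_abs, Rabs_Ropp, Rabs_pos_eq by lra; reflexivity. Qed.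

Lemma du_lipschitz_half n w lo hi : 0 <= w <= Om -> 0 <= lo ->
  (forall y, lo <= y <= hi -> du y = dosc c w (amp n) (center n) y) ->
  lipschitz_on du lo hi (Om^n * (Om + c)^2).
Proof.
  intros Hw Hlo E.
  apply (lipschitz_ext _ (dosc c w (amp n) (center n))); [exact E |].
  apply (lipschitz_of_derive _ (ddosc c w (amp n) (center n)));
    [intros; apply dosc_derive |].
  intros y Hy; eapply Rle_trans; [apply ddosc_bound; lra |].
  rewrite amp_abs; apply Rmult_le_compat_l; [apply pow_le; lra | nra].
Qed.

Lemma du_lipschitz N : lipschitz_on du 0 (INR N * period) (Om^N * (Om + c)^2).
Proof.
  assert (HT := period_pos); assert (Hq := quarter_pos).
  induction N as [|N IH].
  - intros s t Hs Ht; simpl in Hs, Ht.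
    replace s with 0 by lra; replace t with 0 by lra.
    rewrite !Rminus_diag, Rabs_R0; lra.
  - assert (Hc := center_quarter N); assert (HP := PI_RGT_0).
    assert (HNT : 0 <= INR N * period) by (apply Rmult_le_pos; [apply pos_INR | lra]).
    assert (Hgrow : Om^N * (Om + c)^2 <= Om^(S N) * (Om + c)^2)
      by (simpl; apply Rmult_le_compat_r; [nra | assert (0 < Om^N) by (apply pow_lt; lra); nra]).
    assert (HL : 0 <= Om^(S N) * (Om + c)^2) by (apply Rmult_le_pos; [apply pow_le | ]; nra).
    unfold center in *; rewrite S_INR.
    apply (lipschitz_concat _ _ (INR N * period + PI/2)); [lra | lra | |].
    + apply (lipschitz_concat _ _ (INR N * period)); [lra | lra | |].
      * exact (lipschitz_weaken _ _ _ _ _ Hgrow IH).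
      * apply (lipschitz_weaken _ _ _ _ _ Hgrow), (du_lipschitz_half N 1); [lra | lra |].
        intros y Hy; apply u_first_half; auto.
    + apply (lipschitz_weaken _ _ _ _ _ Hgrow), (du_lipschitz_half N Om); [lra | lra |].
      intros y Hy; apply u_second_half; unfold center; lra.
Qed.

Lemma u_W2inf_loc : W2inf_loc u du.
Proof.
  split; [exact u_derive |].
  intros T HT; destruct (idx_spec period T period_pos HT) as [_ L2].
  exists (Om^(S (idx period T)) * (Om + c)^2); intros s t Hs Ht.
  apply du_lipschitz; rewrite S_INR; lra.
Qed.

Lemma u_at_center n :
  Rabs (u (center n)) = exp (-(c/2)*(PI/2)) * (Om * exp (-(c/2)*period))^n.
Proof.
  destruct (u_first_half n (center n)) as [-> _]; [unfold center; generalize PI_RGT_0; lra |].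
  unfold osc; rewrite Rminus_diag, Rmult_0_r, cos_0, Rmult_1_r, Rabs_mult, amp_abs.
  rewrite Rabs_pos_eq by (left; apply exp_pos).
  unfold center; replace (-(c/2) * (INR n * period + PI/2))
    with (INR n * (-(c/2)*period) + -(c/2)*(PI/2)) by ring.
  rewrite exp_plus, exp_nat_mult, Rpow_mult_distr; ring.
Qed.

Lemma u_unbounded : 1 < Om * exp (-(c/2)*period) ->
  ~ (exists M, forall t, 0 <= t -> Rabs (u t) <= M).
Proof.
  intros Hrho [M HM]; set (rho := Om * exp (-(c/2)*period)) in *.
  set (A := exp (-(c/2)*(PI/2))); assert (HA : 0 < A) by apply exp_pos.
  destruct (Pow_x_infinity rho ltac:(rewrite Rabs_pos_eq; lra) (M / A + 1)) as [N HN].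
  specialize (HN N (Nat.le_refl N)); rewrite Rabs_pos_eq in HN by (apply pow_le; lra).
  assert (Hc := HM (center N) ltac:(unfold center; generalize PI_RGT_0, (pos_INR N), period_pos; nra)).
  rewrite u_at_center in Hc; fold rho A in Hc.
  assert (A * (M / A + 1) <= A * rho^N) by (apply Rmult_le_compat_l; lra).
  replace (A * (M / A + 1)) with (M + A) in * by (field; lra); lra.
Qed.

End Construction.

(* Parameters: Om = 1 + d and c = 2d / (pi (1 + d)) with d = eps / (8 + eps).  Then
   (Om^2 - 1) / c = pi Om (Om + 1) / 2 < pi + eps, while c period / 2 < 1 - 1/Om, which
   by e^{-x} >= 1 - x gives the growth factor Om e^{-c period / 2} > 1. *)
Lemma parameters eps : 0 < eps -> exists Om c,
  1 < Om /\ 0 < c < 1 /\ Om^2 - 1 < (PI + eps) * c /\ 1 < Om * exp (-(c/2) * period Om).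
Proof.
  intro Heps; assert (HP1 := PI2_1); assert (HP4 := PI_4).
  set (d := eps / (8 + eps)).
  assert (Hd : d * (8 + eps) = eps) by (unfold d; field; lra).
  assert (Hd0 : 0 < d) by (unfold d; apply Rdiv_lt_0_compat; lra).
  assert (Hd1 : d < 1) by nra.
  set (c := 2 * d / (PI * (1 + d))).
  assert (Hc : c * (PI * (1 + d)) = 2 * d) by (unfold c; field; lra).
  assert (Hc0 : 0 < c) by (unfold c; apply Rdiv_lt_0_compat; nra).
  assert (Hc1 : c < 1).
  { apply Rmult_lt_reg_r with (PI * (1 + d)); [nra |]; rewrite Hc; nra. }
  exists (1 + d), c; split; [lra | split; [lra | split]].
  - (* (Om^2 - 1) pi (1 + d) = (2d + d^2) pi (1 + d) < 2 d (pi + eps) *)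
    apply Rmult_lt_reg_r with (PI * (1 + d)); [nra |].
    replace ((PI + eps) * c * (PI * (1 + d))) with ((PI + eps) * (c * (PI * (1 + d)))) by ring.
    rewrite Hc.
    assert (PI * (3 * d + d^2) <= 4 * (3 * d + d^2)) by (apply Rmult_le_compat_r; nra).
    nra.
  - set (x := c / 2 * period (1 + d)).
    assert (Hx : x * (2 * (1 + d)^2) = d * (2 + d)) by (unfold x, period, c; field; lra).
    assert (Hx0 : 0 < x) by nra.
    replace (- (c / 2) * period (1 + d)) with (- x) by (unfold x; ring).
    assert (E := exp_ineq1 (- x) ltac:(lra)).
    assert ((1 + d) * (1 - x) >= 1) by nra.
    nra.
Qed.

Theorem theorem2p2 :
  forall eps : R, 0 < eps ->
  exists (b c C : R) (a : R -> R),
    1 < b /\ 0 < c /\ c < 2 * sqrt b /\ 0 < C /\ C < (PI + eps) * c * sqrt b /\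
    measurable_on_Rplus a /\
    ae_Rplus (fun t => 0 <= a t <= C) /\
    exists u du : R -> R,
      W2inf_loc u du /\
      ae_Rplus (fun t => exists ddu, derivable_pt_lim du t ddu /\
                  ddu + c * du t + (b + a t) * u t = 0) /\
      ~ (exists M, forall t, 0 <= t -> Rabs (u t) <= M).
Proof.
  intros eps Heps.
  destruct (parameters eps Heps) as (Om & c & HOm & [Hc0 Hc1] & HC & Hgrowth).
  assert (Hc2 : 0 < c^2) by (apply pow_lt; lra).
  assert (Hsb : sqrt 1 < sqrt (1 + c^2/4)) by (apply sqrt_lt_1; lra).
  rewrite sqrt_1 in Hsb.
  exists (1 + c^2/4), c, (Om^2 - 1), (a Om).
  split; [lra | split; [lra | split; [lra | split; [nra | split]]]].
  - assert (0 < (PI + eps) * c) by (generalize PI_RGT_0; nra). nra.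
  - split; [apply measurable_of_open_superlevels, a_superlevel_open; lra |].
    split; [apply ae_Rplus_everywhere; intros; apply a_bounds; lra |].
    exists (u c Om), (du c Om).
    split; [apply u_W2inf_loc; lra |].
    split; [apply u_ode_ae; lra | apply u_unbounded; lra].
Qed.
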